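(* Let $H$ be an abelian group with an alternating $\mathbb{Z}$-bilinear form $\langle-,-\rangle\neq0$, and let $z\in\ker\mu$. Then the composition \[ Z_2(\mathbb{Q}[H^{(1)}])_{(z)}\longrightarrow C_2(\mathbb{Q}[H])_{(z)}\longrightarrow \hat C_2(\mathbb{Q}[H])_{(z)}\longrightarrow \mathbb{Q}\otimes_{\mathbb{Z}}(H/\mathbb{Z}z) \] is surjective, where the first map is induced by inclusion, the second is the quotient projection, and the third is the isomorphism induced by $[u]\wedge[v]\mapsto 1\otimes\bar u$ (for $u+v=z$).
   Context: $\mu:H\to\mathrm{Hom}_{\mathbb{Z}}(H,\mathbb{Z})$, $\mu(x)(y)=\langle x,y\rangle$; $H^{(1)}:=H\setminus\ker\mu$. $\mathbb{Q}[S]$ ($S\subset H$) is the $\mathbb{Q}$-vector space with basis symbols $[x]$, $x\in S$; $\mathbb{Q}[H]$ is a Lie algebra via $[[x],[y]]=\langle x,y\rangle[x+y]$ and $\mathbb{Q}[H^{(1)}]$ is a Lie subalgebra. Chevalley–Eilenberg chains $C_p(\mathfrak g)=\bigwedge^p_{\mathbb{Q}}\mathfrak g$ with the standard boundary. For $S\in\{H,H^{(1)}\}$, $C_2(\mathbb{Q}[S])_{(w)}$ is the span of $[u_1]\wedge[u_2]$ with $u_i\in S$, $u_1+u_2=w$, and $Z_2(\mathbb{Q}[S])_{(w)}$ its cycles. $\hat I$ is the ideal of $\bigwedge\mathbb{Q}[H]$ generated by all $[u+v]\wedge[x]-[u]\wedge[x+v]-[v]\wedge[x+u]$, $u,v,x\in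 H$; $\hat C_2(\mathbb{Q}[H])_{(z)}=C_2(\mathbb{Q}[H])_{(z)}/(\hat I\cap C_2(\mathbb{Q}[H])_{(z)})$, which is isomorphic to $\mathbb{Q}\otimes(H/\mathbb{Z}z)$ via $[u]\wedge[z-u]\mapsto 1\otimes\bar u$. *)

From HB Require Import structures.
From mathcomp Require Import all_boot all_order all_algebra.
Set Implicit Arguments. Unset Strict Implicit. Unset Printing Implicit Defensive.
Import Order.TTheory GRing.Theory Num.Theory.
Local Open Scope ring_scope.

Definition biadditive (H : zmodType) (form : H -> H -> int) : Prop :=
  (forall x y w, form (x + y) w = form x w + form y w) /\
  (forall x y w, form x (y + w) = form x y + form x w).

Definition alternating (H : zmodType) (form : H -> H -> int) : Prop :=
  forall x, form x x = 0.

Definition in_ker_mu (H : zmodType) (form : H -> H -> int) (z : H) : Prop :=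
  forall y, form z y = 0.

(* x \in H^(1) = H \ ker mu *)
Definition inH1 (H : zmodType) (form : H -> H -> int) (x : H) : Prop :=
  exists y, form x y != 0.

(* Elements of Q[H] (and of Q[A] for any A) are represented by formal        *)
(* finite sums  sum_i q_i [a_i], i.e. lists of (q_i, a_i).  The coefficient   *)
Definition coefQ (H : zmodType) (s : seq (rat * H)) (h : H) : rat :=
  \sum_(p <- s | p.2 == h) p.1.

(* Elements of C_2(Q[H]) = /\^2 Q[H] are represented by formal finite sums   *)
(* sum_i q_i [x_i] /\ [y_i], i.e. lists of (q_i, x_i, y_i).                   *)

(* Chevalley--Eilenberg boundary C_2 -> C_1:                                  *)
(*   d([x] /\ [y]) = - [[x],[y]] = - <x,y> [x+y].                             *)
Definition bd2 (H : zmodType) (form : H -> H -> int)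
    (c : seq (rat * H * H)) : seq (rat * H) :=
  [seq (- (p.1.1 * (form p.1.2 p.2)%:~R), p.1.2 + p.2) | p <- c].

Definition is_cycle2 (H : zmodType) (form : H -> H -> int)
    (c : seq (rat * H * H)) : Prop :=
  forall h, coefQ (bd2 form c) h = 0.

(* The chain represented by c lies in C_2(Q[H^(1)])_(z): it is a combination *)
(* of [u1] /\ [u2] with u1, u2 in H^(1) and u1 + u2 = z.                      *)
Definition in_C2_H1_weight (H : zmodType) (form : H -> H -> int) (z : H)
    (c : seq (rat * H * H)) : Prop :=
  forall p, p \in c -> [/\ inH1 form p.1.2, inH1 form p.2 & p.1.2 + p.2 = z].

(* Q (x)_Z (H / Z z): presented as the Q-vector space Q[H] modulo            *)
(*   (i)  [a] - [a + k z]            (k : int)   -- this gives Q[H/Zz]        *)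
(*   (ii) [a + b] - [a] - [b]        (a, b : H)  -- this gives Q (x)_Z (H/Zz) *)
(* An element sum_i q_i (x) abar_i is represented by the list of (q_i, a_i).  *)
Definition tensQ_eq (H : zmodType) (z : H) (s t : seq (rat * H)) : Prop :=
  exists (r1 : seq (rat * H * int)) (r2 : seq (rat * H * H)),
    forall h,
      coefQ s h - coefQ t h =
        \sum_(p <- r1) p.1.1 * ((p.1.2 == h)%:R - (p.1.2 + z *~ p.2 == h)%:R)
      + \sum_(p <- r2) p.1.1 * ((p.1.2 + p.2 == h)%:R - (p.1.2 == h)%:R
                                - (p.2 == h)%:R).

(* The composite map C_2(Q[H])_(z) -> hat C_2(Q[H])_(z) ~= Q (x) (H/Zz),     *)
(* [u] /\ [v] |-> 1 (x) ubar (u + v = z), extended Q-linearly:               *)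
Definition phi2 (H : zmodType) (c : seq (rat * H * H)) : seq (rat * H) :=
  [seq (p.1.1, p.1.2) | p <- c].

(** Every chain [q [u] /\ [z - u]] with [u] in [H^(1)] is automatically a
    cycle, since [<u, z - u> = <u, z> = 0] for [z] in [ker mu]; so it suffices
    to hit each generator [q (x) abar].  If [a] lies in [H^(1)] the chain
    [q [a] /\ [z - a]] does it.  Otherwise [a] lies in [ker mu], and for any
    [x] in [H^(1)] (which exists as the form is nonzero) both [a + x] and [x]
    lie in [H^(1)], while [q (x) (a + x)bar - q (x) xbar = q (x) abar]. *)

From HB Require Import structures.
From mathcomp Require Import all_boot all_order all_algebra.
From mathcomp Require Import ring.
From Stdlib Require Import Classical.
Import Order.TTheory GRing.Theory Num.Theory.
Local Open Scope ring_scope.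

Set Implicit Arguments.

Lemma morph_oppr (U V : zmodType) (f : U -> V) :
  {morph f : x y / x + y} -> {morph f : x / - x}.
Proof.
move=> fD x; have f0 : f 0 = 0.
  by apply: (addrI (f 0)); rewrite -fD !addr0.
by apply/eqP; rewrite -subr_eq0 opprK -fD addNr f0.
Qed.

Section BiadditiveAlternating.
Variables (H : zmodType) (form : H -> H -> int).
Hypotheses (Hbil : biadditive form) (Halt : alternating form).

Lemma formNl u y : form (- u) y = - form u y.
Proof. exact: (@morph_oppr _ _ (form^~ y) (fun x x' => proj1 Hbil x x' y)). Qed.

Lemma formNr u y : form y (- u) = - form y u.
Proof. exact: (@morph_oppr _ _ (form y) (proj2 Hbil y)). Qed.

Lemma form_skew u v : form u v = - form v u.
Proof.
have := Halt (u + v).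
rewrite (proj1 Hbil) !(proj2 Hbil) !Halt add0r addr0 => e.
by apply/eqP; rewrite -addr_eq0 e.
Qed.

Variable z : H.
Hypothesis Hz : in_ker_mu form z.

Lemma form_weight_ker u v : u + v = z -> form u v = 0.
Proof.
move=> uvz; have -> : v = z - u by rewrite -uvz addrC addKr.
by rewrite (proj2 Hbil) formNr Halt form_skew Hz oppr0 addr0.
Qed.

Lemma inH1_subl u : inH1 form u -> inH1 form (z - u).
Proof. by case=> y uy; exists y; rewrite (proj1 Hbil) formNl Hz add0r oppr_eq0. Qed.

Lemma C2_H1_weight_cycle c : in_C2_H1_weight form z c -> is_cycle2 form c.
Proof.
move=> Hc h; rewrite /coefQ /bd2 big_map big1_seq // => p /andP [_ pc].
by have [_ _ /form_weight_ker ->] := Hc p pc; rewrite mulr0 oppr0.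
Qed.

Lemma C2_H1_weight_term q u :
  inH1 form u -> in_C2_H1_weight form z [:: (q, u, z - u)].
Proof.
move=> Hu p; rewrite inE => /eqP -> /=.
by split; [exact: Hu | exact: inH1_subl | rewrite addrC subrK].
Qed.

End BiadditiveAlternating.

Lemma C2_H1_weight_cat (H : zmodType) (form : H -> H -> int) z c1 c2 :
  in_C2_H1_weight form z c1 -> in_C2_H1_weight form z c2 ->
  in_C2_H1_weight form z (c1 ++ c2).
Proof. by move=> Hc1 Hc2 p; rewrite mem_cat => /orP [/Hc1 | /Hc2]. Qed.

Section TensorRelation.
Variables (H : zmodType) (z : H).

Lemma coefQ_cat (s t : seq (rat * H)) h : coefQ (s ++ t) h = coefQ s h + coefQ t h.
Proof. exact: big_cat. Qed.

Lemma tensQ_eq_refl s : tensQ_eq z s s.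
Proof. by exists [::], [::] => h; rewrite !big_nil subrr addr0. Qed.

Lemma tensQ_eq_cat s1 s2 t1 t2 :
  tensQ_eq z s1 t1 -> tensQ_eq z s2 t2 -> tensQ_eq z (s1 ++ s2) (t1 ++ t2).
Proof.
move=> [r1 [r2 e]] [r1' [r2' e']]; exists (r1 ++ r1'), (r2 ++ r2') => h.
by rewrite !coefQ_cat !big_cat addrACA -e -e' opprD addrACA.
Qed.

Lemma tensQ_eq_additive q a x : tensQ_eq z [:: (q, a + x); (- q, x)] [:: (q, a)].
Proof.
exists [::], [:: (q, a, x)] => h.
rewrite /coefQ !big_cons !big_nil /=.
by case: (a + x == h); case: (x == h); case: (a == h); rewrite /=; ring.
Qed.

End TensorRelation.

Lemma phi2_cat (H : zmodType) (c1 c2 : seq (rat * H * H)) :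
  phi2 (c1 ++ c2) = phi2 c1 ++ phi2 c2.
Proof. exact: map_cat. Qed.

Lemma C2_H1_weight_lift_term (H : zmodType) (form : H -> H -> int)
    (Hbil : biadditive form) (Hnz : exists x y, form x y != 0)
    (z : H) (Hz : in_ker_mu form z) q a :
  exists c, in_C2_H1_weight form z c /\ tensQ_eq z (phi2 c) [:: (q, a)].
Proof.
have [Ha | Ha] := classic (inH1 form a).
  by exists [:: (q, a, z - a)]; split; [exact: C2_H1_weight_term | exact: tensQ_eq_refl].
have [x [y xy]] := Hnz.
have a_ker w : form a w = 0.
  by case: (eqVneq (form a w) 0) => // aw; case: Ha; exists w.
have Hax : inH1 form (a + x) by exists y; rewrite (proj1 Hbil) a_ker add0r.
exists ([:: (q, a + x, z - (a + x))] ++ [:: (- q, x, z - x)]); split.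
  by apply: C2_H1_weight_cat; apply: C2_H1_weight_term => //; exists y.
exact: tensQ_eq_additive.
Qed.

Theorem proposition3p4 (H : zmodType) (form : H -> H -> int)
    (Hbil : biadditive form) (Halt : alternating form)
    (Hnz : exists x y, form x y != 0)
    (z : H) (Hz : in_ker_mu form z) :
  forall t : seq (rat * H),
    exists c : seq (rat * H * H),
      [/\ in_C2_H1_weight form z c, is_cycle2 form c & tensQ_eq z (phi2 c) t].
Proof.
suff lift t : exists c, in_C2_H1_weight form z c /\ tensQ_eq z (phi2 c) t.
  move=> t; have [c [Hc ct]] := lift t.
  by exists c; split => //; exact: C2_H1_weight_cycle Hc.
elim: t => [|[q a] t [c [Hc ct]]]; first by exists [::]; split => //; exact: tensQ_eq_refl.
have [c0 [Hc0 c0a]] := C2_H1_weight_lift_term Hbil Hnz Hz q a.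
exists (c0 ++ c); split; first exact: C2_H1_weight_cat.
by rewrite phi2_cat; exact: (tensQ_eq_cat c0a ct).
Qed.
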